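(* Let $W$ be a set of $n$ workers and $F$ a set of $n$ firms ($n\ge 2$), where each worker $w$ has a strict complete preference order $\succ_w$ over $F$ and each firm $f$ has a strict complete preference order $\succ_f$ over $W$; call this instance $P$. Let $P^*$ be the normal form of $P$ (defined in the context), with normal-form lists $L^*_w\subseteq F$ for each worker and $L^*_f\subseteq W$ for each firm. Then the following three statements are equivalent: (a) $P$ has a unique stable matching. (b) $P^*$ is acyclic, i.e. there do not exist an integer $k$ with $2\le k\le n$, distinct workers $w_1,\dots,w_k$ and distinct firms $f_1,\dots,f_k$ such that, for all $j=1,\dots,k$ (indices modulo $k$), $f_j,f_{j+1}\in L^*_{w_j}$ with $f_{j+1}\succ_{w_j} f_j$, and $w_j,w_{j-1}\in L^*_{f_j}$ with $w_j\succ_{f_j} w_{j-1}$. (c) In $P^*$ every worker's list $L^*_w$ and every firm's list $L^*_f$ consists of exactly one element.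
   Context: A matching is a bijection $\mu$ pairing each worker with exactly one firm and each firm with exactly one worker. A worker $w$ and firm $f$ form a blocking pair for $\mu$ if $f\succ_w \mu(w)$ and $w\succ_f\mu(f)$; $\mu$ is stable if it has no blocking pair. Iterated deletion of unattractive alternatives (IDUA) and the normal form: start with lists $L^0_w=F$ for every worker $w$ and $L^0_f=W$ for every firm $f$ (so $f\in L^0_w$ iff $w\in L^0_f$), each list ordered by the participant's original preference. Given lists $L^{k-1}$ (with $f\in L^{k-1}_w$ iff $w\in L^{k-1}_f$), for a worker $w$ and a firm $f\in L^{k-1}_w$ say the pair $(w,f)$ is mutually unattractive at round $k$ if either (i) there is $f'\in L^{k-1}_w$ with $f'\succ_w f$ such that $w$ is the $\succ_{f'}$-most preferred element of $L^{k-1}_{f'}$, or (ii) there is $w'\in L^{k-1}_f$ with $w'\succ_f w$ such that $f$ is the $\succ_{w'}$-most preferred element of $L^{k-1}_{w'}$. Define $L^k_w$ (resp. $L^k_f$) by removing from $L^{k-1}_w$ every $f$ (resp. from $L^{k-1}_f$ every $w$) such that $(w,f)$ is mutually unattractive at round $k$. The normal form $P^*$ is the collection of lists $L^{k^*}$ where $k^*$ is the least $k$ with $L^{k+1}=L^k$; its lists are denoted $L^*_w$, $L^*_f$, each ordered by the original preferences. *)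

From mathcomp Require Import all_boot all_order all_fingroup.
Set Implicit Arguments. Unset Strict Implicit. Unset Printing Implicit Defensive.

(* Workers and firms are both indexed by 'I_n.  A strict complete preference
   order is encoded by a ranking permutation: rank 0 = most preferred. *)
Section Matching.
Variable n : nat.
Variable rankW : 'I_n -> {perm 'I_n}.
Variable rankF : 'I_n -> {perm 'I_n}.

Definition prefW (w f f' : 'I_n) : bool := (rankW w f < rankW w f')%N.
Definition prefF (f w w' : 'I_n) : bool := (rankF f w < rankF f w')%N.

(* a matching: worker w is matched with firm mu w; firm f with mu^-1 f *)
Definition blocking (mu : {perm 'I_n}) (w f : 'I_n) : bool :=
  prefW w f (mu w) && prefF f w ((mu^-1)%g f).

Definition stable (mu : {perm 'I_n}) : Prop := forall w f, ~~ blocking mu w f.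

(* Lists are encoded jointly by a set E of pairs (w, f):
   f \in L_w  <->  w \in L_f  <->  (w, f) \in E. *)
Definition topF (E : {set 'I_n * 'I_n}) (f w : 'I_n) : bool :=
  ((w, f) \in E) && [forall w' : 'I_n, ((w', f) \in E) && (w' != w) ==> prefF f w w'].
Definition topW (E : {set 'I_n * 'I_n}) (w f : 'I_n) : bool :=
  ((w, f) \in E) && [forall f' : 'I_n, ((w, f') \in E) && (f' != f) ==> prefW w f f'].

Definition unattractive (E : {set 'I_n * 'I_n}) (w f : 'I_n) : bool :=
  [exists f' : 'I_n, [&& (w, f') \in E, prefW w f' f & topF E f' w]] ||
  [exists w' : 'I_n, [&& (w', f) \in E, prefF f w' w & topW E w' f]].

Definition idua_step (E : {set 'I_n * 'I_n}) : {set 'I_n * 'I_n} :=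
  [set p in E | ~~ unattractive E p.1 p.2].

Definition L (k : nat) : {set 'I_n * 'I_n} := iter k idua_step setT.

Lemma idua_step_sub E : idua_step E \subset E.
Proof. by apply/subsetP => p; rewrite inE => /andP[]. Qed.

Lemma L_fix_aux k :
  (exists2 j, (j <= k)%N & L j.+1 = L j) \/ (#|L k| + k <= #|{: 'I_n * 'I_n}|)%N.
Proof.
elim: k => [|k [IH|IH]]; first by right; rewrite addn0 /L /= cardsT.
- by left; case: IH => j hj e; exists j => //; apply: leqW.
- have [e|ne] := eqVneq (L k.+1) (L k); first by left; exists k.
  right; have hp : L k.+1 \proper L k.
    by rewrite properEneq ne /L /= idua_step_sub.
  have := proper_card hp; rewrite addnS => h; apply: leq_trans IH.
  by rewrite ltn_add2r.
Qed.

Lemma L_fix_exists : exists k, L k.+1 = L k.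
Proof.
case: (L_fix_aux #|{: 'I_n * 'I_n}|.+1) => [[j _ e]|h]; first by exists j.
by exfalso; move: h; rewrite addnS ltnNge leq_addl.
Qed.

Definition kstar : nat := ex_minn (P := fun k => L k.+1 == L k)
  (let: ex_intro k e := L_fix_exists in ex_intro _ k (introT eqP e)).

Definition Lstar : {set 'I_n * 'I_n} := L kstar.

Definition acyclic : Prop :=
  ~ exists (k : nat) (ws fs : 'I_k -> 'I_n),
      [/\ (2 <= k <= n)%N, injective ws, injective fs &
        forall j : 'I_k,
          [/\ (ws j, fs j) \in Lstar, (ws j, fs (ordS j)) \in Lstar,
              prefW (ws j) (fs (ordS j)) (fs j),
              (ws (ord_pred j), fs j) \in Lstar &
              prefF (fs j) (ws j) (ws (ord_pred j))]].

Definition singleton_lists : Prop :=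
  (forall w : 'I_n, #|[set f : 'I_n | (w, f) \in Lstar]| = 1%N) /\
  (forall f : 'I_n, #|[set w : 'I_n | (w, f) \in Lstar]| = 1%N).

Definition unique_stable : Prop :=
  exists mu : {perm 'I_n}, stable mu /\ forall mu', stable mu' -> mu' = mu.

End Matching.

From mathcomp Require Import all_boot all_order all_fingroup.
Set Implicit Arguments. Unset Strict Implicit. Unset Printing Implicit Defensive.

(* IDUA only deletes a pair (w, f) that one side rejects: say f still heads
   the list of some worker and prefers every remaining suitor to w.  This
   invariant, together with the normal form being a fixed point, shows that in
   P* every list is nonempty, every agent is the last entry in the list of the
   agent it ranks first, and giving every worker the head of its list is a
   stable matching sigma; symmetrically, giving every firm the head of its list
   is a stable matching tau^-1.  No stable matching ever loses a pair under
   IDUA.  Hence a unique stable matching forces sigma = tau^-1, which makes all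
   lists singletons, which forces uniqueness and acyclicity; and when
   sigma <> tau^-1, iterating f |-> sigma (tau f) from a firm it moves traces a
   cycle of P*. *)

Lemma prefFE n (rank : 'I_n -> {perm 'I_n}) : prefF rank = prefW rank.
Proof. by []. Qed.

Section Preferences.
Variables (n : nat) (rank : 'I_n -> {perm 'I_n}).
Implicit Types (E : {set 'I_n * 'I_n}) (a x y z : 'I_n).

Lemma prefW_irr a x : ~~ prefW rank a x x.
Proof. by rewrite /prefW ltnn. Qed.

Lemma prefW_asym a x y : prefW rank a x y -> ~~ prefW rank a y x.
Proof. by rewrite /prefW -leqNgt => /ltnW. Qed.

Lemma prefW_trans a x y z :
  prefW rank a x y -> prefW rank a y z -> prefW rank a x z.
Proof. exact: ltn_trans. Qed.

Lemma prefW_total a x y : x != y -> prefW rank a x y || prefW rank a y x.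
Proof. by rewrite /prefW -neq_ltn (inj_eq val_inj) (inj_eq perm_inj). Qed.

Lemma topWP E a x :
  reflect ((a, x) \in E /\ forall y, (a, y) \in E -> y != x -> prefW rank a x y)
          (topW rank E a x).
Proof.
apply: (iffP andP) => -[ax_in ax_top]; split=> //.
  by move=> y ay_in y_neq; move/forallP/(_ y): ax_top; rewrite ay_in y_neq.
by apply/forallP => y; apply/implyP => /andP[]; apply: ax_top.
Qed.

Lemma topW_uniq E a x y : topW rank E a x -> topW rank E a y -> x = y.
Proof.
move=> /topWP[ax_in ax_top] /topWP[ay_in ay_top]; apply/eqP; apply: contraT => neq.
by move/prefW_asym: (ay_top x ax_in neq); rewrite ax_top // eq_sym.
Qed.

Lemma topW_exists E a x : (a, x) \in E -> exists y, topW rank E a y.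
Proof.
move=> ax_in; have [y ay_in y_min] :=
  @arg_minnP _ x (fun y => (a, y) \in E) (fun y => rank a y : nat) ax_in.
exists y; apply/topWP; split=> // z az_in z_neq.
by rewrite /prefW ltn_neqAle y_min // andbT (inj_eq val_inj) (inj_eq perm_inj) eq_sym.
Qed.

End Preferences.

Section PermCycle.
Variables (T : finType) (s : {perm T}).

Lemma perm_cycle x : s x != x ->
  exists k (c : 'I_k -> T),
    [/\ 1 < k <= #|T|, injective c, forall j, c (ordS j) = s (c j)
      & forall j, s (c j) != c j].
Proof.
move=> sx_neq; set k := #|porbit s x|.
have k_gt1 : 1 < k.
  rewrite ltn_neqAle lt0n card_porbit_neq0 andbT.
  apply: contraNneq sx_neq => k1; apply/eqP.
  by have := iter_porbit s x; rewrite -/k -k1.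
exists k, (fun j => iter j s x); split.
- by rewrite k_gt1 max_card.
- move=> i j /eqP.
  rewrite -(nth_traject _ (ltn_ord i)) -(nth_traject _ (ltn_ord j)).
  by rewrite nth_uniq ?size_traject ?uniq_traject_porbit // => /eqP/val_inj.
- move=> j /=; have [lt_jk | le_kj] := ltnP j.+1 k; first by rewrite modn_small.
  have jk : j.+1 = k by apply/eqP; rewrite eqn_leq ltn_ord le_kj.
  by rewrite jk modnn -iterS jk iter_porbit.
- by move=> j; rewrite -iterS iterSr -!permX (inj_eq perm_inj).
Qed.

End PermCycle.

(* Firm-side facts are derived from worker-side ones applied to the instance
   with the roles of workers and firms exchanged, whose lists are the
   transposed pairs. *)
Definition transpose n (E : {set 'I_n * 'I_n}) : {set 'I_n * 'I_n} :=
  [set p | (p.2, p.1) \in E].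

Definition unattractiveF n (rankW rankF : 'I_n -> {perm 'I_n})
    (E : {set 'I_n * 'I_n}) (w f : 'I_n) : bool :=
  [exists w', [&& (w', f) \in E, prefF rankF f w' w & topW rankW E w' f]].

Definition firm_rejects n (rankW rankF : 'I_n -> {perm 'I_n})
    (E : {set 'I_n * 'I_n}) (f w : 'I_n) : bool :=
  [exists w0, topW rankW E w0 f] && [forall w', ((w', f) \in E) ==> prefF rankF f w' w].

Definition deletions_rejected n (rankW rankF : 'I_n -> {perm 'I_n})
    (E : {set 'I_n * 'I_n}) : Prop :=
  forall w f, (w, f) \notin E ->
    firm_rejects rankW rankF E f w || firm_rejects rankF rankW (transpose E) w f.

Section Transpose.
Variable n : nat.
Implicit Types (E : {set 'I_n * 'I_n}) (w f : 'I_n) (mu : {perm 'I_n}).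

Lemma mem_transpose E f w : ((f, w) \in transpose E) = ((w, f) \in E).
Proof. by rewrite inE. Qed.

Lemma transposeK : involutive (@transpose n).
Proof. by move=> E; apply/setP => -[w f]; rewrite !mem_transpose. Qed.

Variables rankW rankF : 'I_n -> {perm 'I_n}.

Lemma topF_transpose E f w : topF rankF E f w = topW rankF (transpose E) f w.
Proof.
rewrite /topF /topW mem_transpose; congr (_ && _).
by apply: eq_forallb => w'; rewrite mem_transpose.
Qed.

Lemma topFP E f w :
  reflect ((w, f) \in E /\ forall w', (w', f) \in E -> w' != w -> prefF rankF f w w')
          (topF rankF E f w).
Proof.
rewrite topF_transpose; apply: (iffP (topWP _ _ _ _)); rewrite mem_transpose.
  by move=> [wf_in w_top]; split=> // w'; rewrite -mem_transpose; apply: w_top.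
by move=> [wf_in w_top]; split=> // w'; rewrite mem_transpose; apply: w_top.
Qed.

Lemma unattractiveE E w f :
  unattractive rankW rankF E w f =
  unattractiveF rankF rankW (transpose E) f w || unattractiveF rankW rankF E w f.
Proof.
congr (_ || _); apply: eq_existsb => f'.
by rewrite mem_transpose topF_transpose.
Qed.

Lemma LS k : L rankW rankF k.+1 = idua_step rankW rankF (L rankW rankF k).
Proof. by []. Qed.

Lemma stable_transpose mu : stable rankF rankW mu^-1 <-> stable rankW rankF mu.
Proof.
have blockingE w f : blocking rankF rankW mu^-1 f w = blocking rankW rankF mu w f.
  by rewrite /blocking invgK andbC.
by split=> mu_stable w f; rewrite ?blockingE // -blockingE.
Qed.

End Transpose.

Section TransposeIDUA.
Variables (n : nat) (rankW rankF : 'I_n -> {perm 'I_n}).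
Implicit Type E : {set 'I_n * 'I_n}.

Lemma idua_step_transpose E :
  idua_step rankF rankW (transpose E) = transpose (idua_step rankW rankF E).
Proof.
apply/setP => -[f w]; rewrite mem_transpose !inE /=.
by rewrite !unattractiveE transposeK orbC.
Qed.

Lemma L_transpose k : L rankF rankW k = transpose (L rankW rankF k).
Proof.
elim: k => [|k IHk]; first by apply/setP => -[f w]; rewrite mem_transpose !inE.
by rewrite !LS IHk idua_step_transpose.
Qed.

Lemma Lstar_transpose : Lstar rankF rankW = transpose (Lstar rankW rankF).
Proof.
rewrite /Lstar L_transpose /kstar; congr (transpose (L _ _ _)).
by apply: eq_ex_minn => k; rewrite !L_transpose (can_eq (@transposeK n)).
Qed.

End TransposeIDUA.

Section Step.
Variables (n : nat) (rankW rankF : 'I_n -> {perm 'I_n}).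
Implicit Types (E : {set 'I_n * 'I_n}) (w f : 'I_n).
Local Notation step := (idua_step rankW rankF).

Lemma mem_step E w f :
  ((w, f) \in step E) = ((w, f) \in E) && ~~ unattractive rankW rankF E w f.
Proof. by rewrite inE. Qed.

Lemma step_sub E w f : (w, f) \in step E -> (w, f) \in E.
Proof. by rewrite mem_step => /andP[]. Qed.

Lemma unattractiveF_step E w f : unattractiveF rankW rankF E w f -> (w, f) \notin step E.
Proof. by move=> wf_unatt; rewrite mem_step unattractiveE wf_unatt orbT andbF. Qed.

Lemma held_step E f :
  [exists w, topW rankW E w f] -> [exists w, topW rankW (step E) w f].
Proof.
case/existsP => w0 w0_top.
have [w w_top w_best] :=
  @arg_minnP _ w0 (fun w => topW rankW E w f) (fun w => rankF f w : nat) w0_top.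
have /topWP[wf_in w_pref] := w_top.
apply/existsP; exists w; apply/topWP; split=> [|f' /step_sub]; last exact: w_pref.
rewrite mem_step wf_in /= unattractiveE negb_or; apply/andP; split.
  apply/existsPn => f'; apply/and3P => -[+ f'_pref _]; rewrite mem_transpose => wf'_in.
  have f'_neq : f' != f by apply: contraTneq f'_pref => ->; rewrite prefW_irr.
  by move/negP: (prefW_asym (w_pref f' wf'_in f'_neq)).
apply/existsPn => w'; apply/and3P => -[_ w'_pref w'_top].
by move: w'_pref; rewrite prefFE /prefW ltnNge w_best.
Qed.

Lemma firm_rejects_step E f w :
  firm_rejects rankW rankF E f w -> firm_rejects rankW rankF (step E) f w.
Proof.
case/andP => /held_step held w_worse; rewrite /firm_rejects held.
apply/forallP => w'; apply/implyP => /step_sub w'f_in.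
exact: implyP (forallP w_worse w') w'f_in.
Qed.

Lemma firm_rejects_unattractiveF E w f :
  unattractiveF rankW rankF E w f -> firm_rejects rankW rankF (step E) f w.
Proof.
move=> wf_unatt; have /existsP[w' /and3P[w'f_in w'_pref w'_top]] := wf_unatt.
rewrite /firm_rejects held_step /=; last by apply/existsP; exists w'.
apply/forallP => w''; apply/implyP => w''f_in.
have w''_neq : w'' != w.
  by apply: contraTneq w''f_in => ->; apply: unattractiveF_step.
have [//|w_pref] := orP (prefW_total rankF f w''_neq).
suff : (w'', f) \notin step E by rewrite w''f_in.
apply: unattractiveF_step; apply/existsP; exists w'.
by rewrite w'f_in w'_top prefFE (prefW_trans w'_pref w_pref).
Qed.

Lemma stable_unattractiveF mu E w :
  stable rankW rankF mu -> (forall w, (w, mu w) \in E) ->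
  ~~ unattractiveF rankW rankF E w (mu w).
Proof.
move=> mu_stable mu_in; apply/existsPn => w'.
apply/and3P => -[_ w'_pref /topWP[_ w'_top]].
have w'_neq : mu w' != mu w.
  by rewrite (inj_eq perm_inj); apply: contraTneq w'_pref => ->; rewrite prefW_irr.
move/negP: (mu_stable w' (mu w)); apply.
by rewrite /blocking w'_top ?mu_in // permK.
Qed.

End Step.

Section Invariant.
Variables (n : nat) (rankW rankF : 'I_n -> {perm 'I_n}).

Lemma deletions_rejected_step E :
  deletions_rejected rankW rankF E ->
  deletions_rejected rankW rankF (idua_step rankW rankF E).
Proof.
move=> E_rej w f; rewrite mem_step negb_and negbK -idua_step_transpose.
case/orP => [/E_rej/orP[] | ].
- by move/firm_rejects_step ->.
- by move/firm_rejects_step ->; rewrite orbT.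
rewrite unattractiveE => /orP[] /firm_rejects_unattractiveF -> //; exact: orbT.
Qed.

Lemma deletions_rejected_L k : deletions_rejected rankW rankF (L rankW rankF k).
Proof.
elim: k => [|k IHk]; first by move=> w f; rewrite in_setT.
by rewrite LS; apply: deletions_rejected_step.
Qed.

Lemma stable_in_L mu k w :
  stable rankW rankF mu -> (w, mu w) \in L rankW rankF k.
Proof.
move=> mu_stable; elim: k w => [|k IHk] w; first by rewrite in_setT.
have muV_in f : (f, (mu^-1)%g f) \in L rankF rankW k.
  by rewrite L_transpose mem_transpose -{2}(permKV mu f) IHk.
rewrite LS mem_step IHk unattractiveE negb_or -L_transpose.
rewrite (stable_unattractiveF _ mu_stable IHk) andbT -{2}(permK mu w).
by apply: stable_unattractiveF muV_in; apply/stable_transpose.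
Qed.

End Invariant.

Section TopMatching.
Variables (n : nat) (rankW rankF : 'I_n -> {perm 'I_n}).
Implicit Types (w f : 'I_n).
Local Notation E := (Lstar rankW rankF).

Lemma Lstar_fixed : idua_step rankW rankF E = E.
Proof. by rewrite /Lstar /kstar; case: ex_minnP => k /eqP. Qed.

Lemma Lstar_unattractiveF w f : unattractiveF rankW rankF E w f -> (w, f) \notin E.
Proof. by move/unattractiveF_step; rewrite Lstar_fixed. Qed.

Lemma Lstar_list_neq0 w : exists f, (w, f) \in E.
Proof.
(* If the list of w were empty, the invariant would make every firm the head
   of some worker's list; these n workers are distinct, so w is among them. *)
have [/existsP // | /existsPn w_out] := boolP [exists f, (w, f) \in E].
have held f : exists w', topW rankW E w' f.
  case/orP: (deletions_rejected_L (w_out f)).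
    by case/andP => /existsP.
  case/andP => /existsP[f' /topWP[]]; rewrite mem_transpose.
  by rewrite (negbTE (w_out f')).
have [holder holderP] := fin_all_exists held.
have holder_inj : injective holder.
  by move=> f f' eq_holder; apply: topW_uniq (holderP f) _; rewrite eq_holder.
have [holderV _ holderVK] := injF_bij holder_inj.
by have /topWP[] := holderP (holderV w); rewrite holderVK (negbTE (w_out _)).
Qed.

Lemma Lstar_topW_worst w f w' :
  topW rankW E w f -> (w', f) \in E -> w' != w -> prefF rankF f w' w.
Proof.
move=> w_top w'f_in w'_neq; have [//|w_pref] := orP (prefW_total rankF f w'_neq).
suff : (w', f) \notin E by rewrite w'f_in.
have /topWP[wf_in _] := w_top.
by apply: Lstar_unattractiveF; apply/existsP; exists w; rewrite wf_in w_top prefFE w_pref.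
Qed.

Definition top_choice w := odflt w [pick f | topW rankW E w f].

Lemma top_choiceP w : topW rankW E w (top_choice w).
Proof.
rewrite /top_choice; case: pickP => [//|no_top].
have [f wf_in] := Lstar_list_neq0 w; have [f' wf'_top] := topW_exists rankW wf_in.
by rewrite no_top in wf'_top.
Qed.

Lemma top_choice_inj : injective top_choice.
Proof.
move=> w1 w2 eq_top; apply/eqP; apply: contraT => w_neq.
have /topWP[w1_in _] := top_choiceP w1; have /topWP[w2_in _] := top_choiceP w2.
have pref21 : prefF rankF (top_choice w1) w2 w1.
  by apply: Lstar_topW_worst (top_choiceP w1) _ _; rewrite ?eq_top // eq_sym.
have pref12 : prefF rankF (top_choice w1) w1 w2.
  by rewrite eq_top; apply: Lstar_topW_worst (top_choiceP w2) _ w_neq; rewrite -eq_top.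
by move: pref12; rewrite prefFE (negbTE (prefW_asym pref21)).
Qed.

Definition top_matching : {perm 'I_n} := perm top_choice_inj.

Lemma top_matchingP w : topW rankW E w (top_matching w).
Proof. by rewrite permE top_choiceP. Qed.

Lemma top_matching_stable : stable rankW rankF top_matching.
Proof.
move=> w f; apply/andP => -[f_pref w_pref].
have /topWP[wtop_in w_top] := top_matchingP w.
have [wf_in | wf_out] := boolP ((w, f) \in E).
  have f_neq : f != top_matching w.
    by apply: contraTneq f_pref => ->; rewrite prefW_irr.
  by move/negP: (prefW_asym (w_top f wf_in f_neq)).
have /topWP[w0f_in _] := top_matchingP ((top_matching^-1)%g f); rewrite permKV in w0f_in.
case/orP: (deletions_rejected_L wf_out) => /andP[_ /forallP w_worse].
  by move/negP: (prefW_asym w_pref); apply; apply: (implyP (w_worse _)).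
move/negP: (prefW_asym f_pref); apply; apply: (implyP (w_worse _)).
by rewrite mem_transpose.
Qed.

End TopMatching.

Section FirmSide.
Variables (n : nat) (rankW rankF : 'I_n -> {perm 'I_n}).
Implicit Types (w f : 'I_n).
Local Notation E := (Lstar rankW rankF).
Local Notation sigma := (top_matching rankW rankF).
Local Notation tau := (top_matching rankF rankW).

Lemma top_suitorP f : topF rankF E f (tau f).
Proof. by rewrite topF_transpose -Lstar_transpose top_matchingP. Qed.

Lemma Lstar_topF_worst f w f' :
  topF rankF E f w -> (w, f') \in E -> f' != f -> prefW rankW w f' f.
Proof.
by rewrite topF_transpose -mem_transpose -Lstar_transpose; apply: Lstar_topW_worst.
Qed.

Lemma firm_optimal_stable : stable rankW rankF tau^-1.
Proof. exact/stable_transpose/top_matching_stable. Qed.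

Lemma Lstar_list1 : (forall w, tau (sigma w) = w) ->
  forall w, [set f | (w, f) \in E] = [set sigma w].
Proof.
move=> sigmaK w; apply/setP => f; rewrite !inE.
have /topWP[wsigma_in sigma_top] := top_matchingP rankW rankF w.
apply/idP/eqP => [wf_in | ->] //; apply/eqP; apply: contraT => f_neq.
have := Lstar_topF_worst (top_suitorP (sigma w)); rewrite sigmaK.
by move=> /(_ f wf_in f_neq) /prefW_asym; rewrite sigma_top.
Qed.

End FirmSide.

Section Equivalence.
Variables (n : nat) (rankW rankF : 'I_n -> {perm 'I_n}).
Implicit Types (w f : 'I_n).
Local Notation E := (Lstar rankW rankF).
Local Notation sigma := (top_matching rankW rankF).
Local Notation tau := (top_matching rankF rankW).

Lemma unique_stable_top_matchings : unique_stable rankW rankF -> sigma = (tau^-1)%g.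
Proof.
case=> mu [_ mu_uniq].
by rewrite (mu_uniq _ (top_matching_stable _ _)) (mu_uniq _ (firm_optimal_stable _ _)).
Qed.

Lemma top_matchings_singleton_lists : sigma = (tau^-1)%g -> singleton_lists rankW rankF.
Proof.
move=> sigmaE; split=> [w | f].
  by rewrite Lstar_list1 ?cards1 // => w'; rewrite sigmaE permKV.
have tauK f' : sigma (tau f') = f' by rewrite sigmaE permK.
rewrite -(cards1 (tau f)) -(Lstar_list1 tauK); apply: eq_card => w.
by rewrite !inE Lstar_transpose mem_transpose.
Qed.

Lemma singleton_lists_uniq w f f' : singleton_lists rankW rankF ->
  (w, f) \in E -> (w, f') \in E -> f = f'.
Proof.
case=> /(_ w)/eqP/cards1P[x list_x] _.
have mem_x f0 : (w, f0) \in E -> f0 = x by move=> wf0; apply/set1P; rewrite -list_x inE.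
by move=> /mem_x -> /mem_x ->.
Qed.

Lemma singleton_lists_unique_stable :
  singleton_lists rankW rankF -> unique_stable rankW rankF.
Proof.
move=> single; exists sigma; split=> [|mu mu_stable]; first exact: top_matching_stable.
apply/permP => w; apply: singleton_lists_uniq single _ _; first exact: stable_in_L.
by case/topWP: (top_matchingP rankW rankF w).
Qed.

Lemma singleton_lists_acyclic : singleton_lists rankW rankF -> acyclic rankW rankF.
Proof.
move=> single [k [ws [fs [/andP[k_gt1 _] _ _ cyc]]]].
have [wf_in wfS_in pref _ _] := cyc (Ordinal (ltnW k_gt1)).
move: pref; rewrite (singleton_lists_uniq single wfS_in wf_in).
exact/negP/prefW_irr.
Qed.

Lemma acyclic_top_matchings : acyclic rankW rankF -> sigma = (tau^-1)%g.
Proof.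
move=> acyc; apply/eqP; apply: contraT => sigma_neq.
have [f0 f0_moved] : exists f0, (tau * sigma)%g f0 != f0.
  apply/existsP; apply: contraR sigma_neq => /existsPn fixed; apply/eqP/permP => w.
  by apply/eqP; move: (fixed ((tau^-1)%g w)); rewrite permM permKV negbK.
have [k [fs [/andP[k_gt1 k_le] fs_inj fsS fs_moved]]] := perm_cycle f0_moved.
exfalso; apply: acyc; exists k, (fun j => tau (fs j)), fs; split.
- by rewrite k_gt1 (leq_trans k_le) ?card_ord.
- by move=> i j /perm_inj/fs_inj.
- exact: fs_inj.
move=> j; set j' := ord_pred j.
rewrite fsS permM.
have fs_j : fs j = sigma (tau (fs j')) by rewrite -permM -fsS ord_predK.
have /topFP[tau_in tau_top] := top_suitorP rankW rankF (fs j).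
have /topWP[sigma_in sigma_top] := top_matchingP rankW rankF (tau (fs j)).
have /topWP[sigma'_in _] := top_matchingP rankW rankF (tau (fs j')).
have fs_neq : fs j != sigma (tau (fs j)) by rewrite eq_sym -permM fs_moved.
have ws_neq : tau (fs j') != tau (fs j).
  by rewrite (inj_eq perm_inj) fs_j -permM eq_sym fs_moved.
by split=> //; [exact: sigma_top | rewrite fs_j | apply: tau_top ws_neq; rewrite fs_j].
Qed.

End Equivalence.

Theorem theorem1 (n : nat) (rankW rankF : 'I_n -> {perm 'I_n}) :
  (2 <= n)%N ->
  [/\ (unique_stable rankW rankF <-> acyclic rankW rankF),
      (acyclic rankW rankF <-> singleton_lists rankW rankF) &
      (singleton_lists rankW rankF <-> unique_stable rankW rankF)].
Proof.
move=> _.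
have us_tm := @unique_stable_top_matchings n rankW rankF.
have tm_sl := @top_matchings_singleton_lists n rankW rankF.
have sl_us := @singleton_lists_unique_stable n rankW rankF.
have sl_ac := @singleton_lists_acyclic n rankW rankF.
have ac_tm := @acyclic_top_matchings n rankW rankF.
by split; split; auto.
Qed.
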